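(* Let $X = \{\sum_{k=0}^m d_k 10^{-k} : m \ge 0,\ d_k \in \{0,1,\dots,9\},\ d_0 \neq 0\}$ be the set of terminating decimals in $[1,10)$. Consider the game in which the casino chooses $x \in X$, the player chooses $y \in X$, and the casino wins if the first (leading) decimal digit of $xy$ is $1$, $2$ or $3$, i.e. $xy \in [1,4)\cup[10,40)$. For probability measures $\mu$ (casino) and $\nu$ (player) on the countable set $X$, let $P(\mu,\nu)=\sum_{x,y \in X} \mu\{x\}\nu\{y\}\,\mathbf 1[xy \in [1,4)\cup[10,40)]$. Then $$\sup_\mu \inf_\nu P(\mu,\nu) = \inf_\nu \sup_\mu P(\mu,\nu) = \log_{10} 4.$$ More precisely, for $n\ge1$ let $X_n\subseteq X$ be the terminating decimals in $[1,10)$ with exactly $n$ digits ($m=n-1$) and let $\beta_n$ be the probability measure on $X_n$ with $\beta_n\{x\} = \log_{10}(x + 10^{-(n-1)}) - \log_{10} x$. Then for every $\epsilon>0$ there is $N$ such that for all $n\ge N$: $P(\beta_n,\nu) \ge \log_{10}4 - \epsilon$ for every $\nu$, and $P(\mu,\beta_n) \le \log_{10}4+\epsilon$ for every $\mu$.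
   Context: This is the ''multiplication game'' in which players choose positive integers and the first digit of the product decides the winner; choosing integers is equivalent to choosing elements of $X$ (moving the decimal point does not affect the leading digit of the product). The casino maximizes and the player minimizes the casino's winning probability $P$. *)

From Stdlib Require Import Reals Lra Lia ClassicalEpsilon.
Open Scope R_scope.

Definition log10 (x : R) : R := ln x / ln 10.

(* X : terminating decimals in [1,10):  x = N / 10^m with 10^m <= N < 10^(m+1),
   i.e. x = sum_{k=0}^m d_k 10^{-k} with d_0 <> 0. *)
Definition inX (x : R) : Prop :=
  exists m N : nat, (10 ^ m <= N < 10 ^ (S m))%nat /\ x = INR N / 10 ^ m.

Definition tsum (f : nat -> R) : R :=
  epsilon (inhabits 0) (fun l => infinite_sum f l).

(* A probability measure on the countable set X, presented as a sequence of
   atoms pt i ∈ X with weights wt i >= 0 summing to 1:  mu = sum_i wt i δ_{pt i}. *)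
Record pmeasure : Type := PMeasure {
  wt : nat -> R;
  pt : nat -> R;
  wt_nonneg : forall i, 0 <= wt i;
  pt_inX : forall i, inX (pt i);
  wt_sum1 : infinite_sum wt 1
}.

Definition win_ind (z : R) : R :=
  if Rle_dec 1 z then (if Rlt_dec z 4 then 1 else
    if Rle_dec 10 z then (if Rlt_dec z 40 then 1 else 0) else 0)
  else 0.

Definition Pw (w : nat -> R) (x : nat -> R) (v : nat -> R) (y : nat -> R) : R :=
  tsum (fun i => w i * tsum (fun j => v j * win_ind (x i * y j))).

Definition P (mu nu : pmeasure) : R := Pw (wt mu) (pt mu) (wt nu) (pt nu).

(* beta_n : atoms of X_n = { N / 10^(n-1) : 10^(n-1) <= N < 10^n }, enumerated as
   (10^(n-1) + i) / 10^(n-1) for i < 9*10^(n-1); remaining indices carry weight 0. *)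
Definition beta_pt (n i : nat) : R :=
  if (i <? 9 * 10 ^ (n - 1))%nat then INR (10 ^ (n - 1) + i) / 10 ^ (n - 1) else 1.

Definition beta_wt (n i : nat) : R :=
  if (i <? 9 * 10 ^ (n - 1))%nat
  then log10 (beta_pt n i + / 10 ^ (n - 1)) - log10 (beta_pt n i)
  else 0.

Definition IsSup (E : R -> Prop) (s : R) : Prop := is_lub E s.
Definition IsInf (E : R -> Prop) (s : R) : Prop := is_lub (fun x => E (- x)) (- s).

From Stdlib Require Import Reals Lra Lia ClassicalEpsilon.
Open Scope R_scope.

(* The key computation: beta_n puts mass log10 x_(i+1) - log10 x_i on the grid
   point x_i of the partition 1 = x_0 < x_1 < ... < x_K = 10 of mesh h = 10^(1-n).
   For any threshold t, the beta-mass of the grid points below t is within h of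
   log10 (clamp t), where clamp t is t truncated to [1,10]  (mass_below_approx).
   The winning set of the casino against a fixed factor c in [1,10) is
   [1/c,4/c) ∪ [10/c,40/c), so against c the mass of winning points is within
   2h of an alternating sum of four clamped logarithms, which equals log10 4
   exactly (four_clamps, win_mass).  Since every element of X lies in [1,10),
   averaging over an arbitrary opponent gives P(beta_n, nu) >= log10 4 - 2h and
   P(mu, beta_n) <= log10 4 + 2h (beta_casino, beta_player).  A general fact
   about two-person games (lower_value, upper_value) turns such
   eps-guarantees into the equalities sup inf = inf sup = log10 4. *)

Fixpoint fsum (K : nat) (f : nat -> R) : R :=
  match K with O => 0 | S k => fsum k f + f k end.

Lemma fsum_ext K f g : (forall i, (i < K)%nat -> f i = g i) -> fsum K f = fsum K g.
Proof.
  induction K as [|K IH]; intro Hfg; simpl; [reflexivity|].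
  rewrite IH by (intros; apply Hfg; lia). rewrite Hfg by lia. reflexivity.
Qed.

Lemma fsum_le K f g : (forall i, f i <= g i) -> fsum K f <= fsum K g.
Proof.
  induction K as [|K IH]; intro Hfg; simpl; [lra|].
  specialize (IH Hfg). specialize (Hfg K). lra.
Qed.

Lemma fsum_nonneg K f : (forall i, 0 <= f i) -> 0 <= fsum K f.
Proof.
  induction K as [|K IH]; intro Hf; simpl; [lra|].
  specialize (IH Hf). specialize (Hf K). lra.
Qed.

Lemma fsum_add K f g : fsum K (fun i => f i + g i) = fsum K f + fsum K g.
Proof. induction K as [|K IH]; simpl; [ring|]. rewrite IH. ring. Qed.

Lemma fsum_sub K f g : fsum K (fun i => f i - g i) = fsum K f - fsum K g.
Proof. induction K as [|K IH]; simpl; [ring|]. rewrite IH. ring. Qed.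

Lemma fsum_scal K a f : fsum K (fun i => a * f i) = a * fsum K f.
Proof. induction K as [|K IH]; simpl; [ring|]. rewrite IH. ring. Qed.

Lemma fsum_telescope K u : fsum K (fun i => u (S i) - u i) = u K - u 0%nat.
Proof. induction K as [|K IH]; simpl; [ring|]. rewrite IH. ring. Qed.

Lemma tsum_eq f l : infinite_sum f l -> tsum f = l.
Proof.
  intro Hf. unfold tsum. apply (uniqueness_sum f); [|exact Hf].
  apply epsilon_spec. exists l. exact Hf.
Qed.

Lemma sum_f_R0_fsum f n : sum_f_R0 f n = fsum (S n) f.
Proof. induction n as [|n IH]; simpl; [ring|]. simpl in IH. rewrite IH. ring. Qed.

Lemma finite_sum f M : (forall i, (M <= i)%nat -> f i = 0) -> infinite_sum f (fsum M f).
Proof.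
  intros Hf eps Heps. exists M. intros n Hn.
  assert (Htail : forall k, (M <= k)%nat -> fsum k f = fsum M f).
  { induction k as [|k IH]; intro Hk.
    - replace M with 0%nat by lia. reflexivity.
    - destruct (Nat.eq_dec (S k) M) as [E|E]; [rewrite E; reflexivity|].
      simpl. rewrite IH, (Hf k) by lia. ring. }
  rewrite sum_f_R0_fsum, Htail by lia.
  unfold Rdist. rewrite Rminus_diag, Rabs_R0. lra.
Qed.

Lemma isum_plus a b la lb : infinite_sum a la -> infinite_sum b lb ->
  infinite_sum (fun n => a n + b n) (la + lb).
Proof.
  intros Ha Hb eps Heps. destruct (CV_plus _ _ _ _ Ha Hb eps Heps) as [N HN].
  exists N. intros n Hn. rewrite plus_sum. apply HN. exact Hn.
Qed.

Lemma isum_scal c a l : infinite_sum a l -> infinite_sum (fun n => c * a n) (c * l).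
Proof.
  intros Ha. assert (Hc : Un_cv (fun _ : nat => c) c).
  { intros eps Heps. exists 0%nat. intros. unfold Rdist. rewrite Rminus_diag, Rabs_R0. lra. }
  intros eps Heps. destruct (CV_mult _ _ _ _ Hc Ha eps Heps) as [N HN].
  exists N. intros n Hn. specialize (HN n Hn). simpl in HN. rewrite scal_sum in HN.
  rewrite (sum_eq _ (fun i => a i * c)) by (intros; ring). exact HN.
Qed.

Lemma isum_le a b la lb :
  (forall n, a n <= b n) -> infinite_sum a la -> infinite_sum b lb -> la <= lb.
Proof.
  intros Hab Ha Hb. apply (@Rle_cv_lim (fun n => sum_f_R0 a n) (fun n => sum_f_R0 b n)); auto.
  intro n. apply sum_Rle. auto.
Qed.

Lemma isum_comp a v lv : (forall j, 0 <= a j <= v j) -> infinite_sum v lv ->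
  infinite_sum a (tsum a).
Proof.
  intros Hav Hv. destruct (Rseries_CV_comp a v Hav (exist _ lv Hv)) as [l Hl].
  rewrite (tsum_eq a l Hl). exact Hl.
Qed.

Lemma isum_swap K c (g : nat -> nat -> R) T :
  (forall i, infinite_sum (g i) (T i)) ->
  infinite_sum (fun j => fsum K (fun i => c i * g i j)) (fsum K (fun i => c i * T i)).
Proof.
  intro Hg. induction K as [|K IH]; simpl.
  - apply (finite_sum (fun _ => 0) 0). auto.
  - apply isum_plus; [exact IH|]. apply isum_scal, Hg.
Qed.

(** Values of a two-person zero-sum game *)

Lemma le_of_forall_eps a b : (forall eps, eps > 0 -> a <= b + eps) -> a <= b.
Proof.
  intro H. destruct (Rle_dec a b) as [|C]; [assumption|]. specialize (H ((a - b) / 2)). lra.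
Qed.

Lemma is_lub_ext (E E' : R -> Prop) s : (forall x, E x <-> E' x) -> is_lub E s -> is_lub E' s.
Proof.
  intros HE [Hub Hleast]. split.
  - intros x Hx. apply Hub, HE, Hx.
  - intros b Hb. apply Hleast. intros x Hx. apply Hb, HE, Hx.
Qed.

Section GameValue.
Variables (A B : Type) (F : A -> B -> R) (v : R).

Hypothesis max_guarantee : forall eps, eps > 0 -> exists a0, forall b, v - eps <= F a0 b.
Hypothesis min_guarantee : forall eps, eps > 0 -> exists b0, forall a, F a b0 <= v + eps.

Lemma row_inf_exists a (b0 : B) lower : (forall b, lower <= F a b) ->
  exists s, IsInf (fun p => exists b, p = F a b) s /\ lower <= s.
Proof.
  intro Hlow.
  assert (Hbound : bound (fun x => exists b, - x = F a b)).
  { exists (- lower). intros x [b' Hb']. specialize (Hlow b'). lra. }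
  destruct (completeness _ Hbound) as [s Hs]; [exists (- F a b0), b0; ring|].
  exists (- s). split.
  - unfold IsInf. rewrite Ropp_involutive. exact Hs.
  - enough (s <= - lower) by lra.
    apply Hs. intros x [b' Hb']. specialize (Hlow b'). lra.
Qed.

Lemma lower_value : IsSup (fun s => exists a, IsInf (fun p => exists b, p = F a b) s) v.
Proof.
  split.
  - intros s [a [Hlb _]]. apply le_of_forall_eps. intros eps Heps.
    destruct (min_guarantee eps Heps) as [b0 Hb0].
    assert (Hs : - F a b0 <= - s) by (apply Hlb; exists b0; ring).
    specialize (Hb0 a). lra.
  - intros u Hu. apply le_of_forall_eps. intros eps Heps.
    destruct (max_guarantee eps Heps) as [a0 Ha0].
    destruct (min_guarantee 1 Rlt_0_1) as [b0 _].
    destruct (row_inf_exists a0 b0 (v - eps) Ha0) as [s [Hinf Hs]].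
    assert (s <= u) by (apply Hu; exists a0; exact Hinf). lra.
Qed.

End GameValue.

(* inf over b of sup over a of F a b equals v: the lower value of the game
   with the roles of the players exchanged and the payoff negated. *)
Lemma upper_value (A B : Type) (F : A -> B -> R) (v : R) :
  (forall eps, eps > 0 -> exists a0, forall b, v - eps <= F a0 b) ->
  (forall eps, eps > 0 -> exists b0, forall a, F a b0 <= v + eps) ->
  IsInf (fun s => exists b, IsSup (fun p => exists a, p = F a b) s) v.
Proof.
  intros Hmax Hmin.
  assert (Hdual := lower_value B A (fun b a => - F a b) (- v)).
  unfold IsInf.
  apply (is_lub_ext (fun s => exists b, IsInf (fun p => exists a, p = - F a b) s)).
  - intro x. split; intros [b Hb]; exists b; revert Hb; apply is_lub_ext;
      intro p; split; intros [a Ha]; exists a; lra.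
  - apply Hdual.
    + intros eps Heps. destruct (Hmin eps Heps) as [b0 Hb0].
      exists b0. intro a. specialize (Hb0 a). lra.
    + intros eps Heps. destruct (Hmax eps Heps) as [a0 Ha0].
      exists a0. intro b. specialize (Ha0 b). lra.
Qed.

Lemma ln10_gt1 : 1 < ln 10.
Proof.
  rewrite <- (ln_exp 1) at 1. apply ln_increasing; [apply exp_pos|].
  pose proof exp_le_3. lra.
Qed.

Lemma log10_le a b : 0 < a -> a <= b -> log10 a <= log10 b.
Proof.
  intros Ha Hab. unfold log10, Rdiv. pose proof ln10_gt1.
  apply Rmult_le_compat_r; [left; apply Rinv_0_lt_compat; lra|].
  destruct (Req_dec a b) as [->|]; [lra|]. left. apply ln_increasing; lra.
Qed.

Lemma log10_1 : log10 1 = 0.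
Proof. unfold log10. rewrite ln_1. unfold Rdiv. ring. Qed.

Lemma log10_10 : log10 10 = 1.
Proof. unfold log10. pose proof ln10_gt1. field. lra. Qed.

Lemma log10_mult a b : 0 < a -> 0 < b -> log10 (a * b) = log10 a + log10 b.
Proof. intros. unfold log10. rewrite ln_mult by assumption. unfold Rdiv. ring. Qed.

Lemma log10_div a b : 0 < a -> 0 < b -> log10 (a / b) = log10 a - log10 b.
Proof.
  intros Ha Hb. assert (Hq : 0 < a / b) by (apply Rdiv_lt_0_compat; assumption).
  assert (Ea : a = a / b * b) by (field; lra).
  rewrite Ea at 2. rewrite log10_mult by assumption. ring.
Qed.

(* log10 is 1-Lipschitz on [1, oo), since ln (b/a) <= b/a - 1 <= b - a and ln 10 > 1. *)
Lemma log10_lipschitz a b : 1 <= a -> a <= b -> log10 b - log10 a <= b - a.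
Proof.
  intros Ha Hab.
  assert (Hq : 1 <= b / a).
  { apply (Rmult_le_reg_r a); [lra|]. unfold Rdiv. rewrite Rmult_assoc, Rinv_l; lra. }
  rewrite <- log10_div by lra.
  assert (Hln0 : 0 <= ln (b / a)).
  { destruct (Req_dec (b / a) 1) as [->|]; [rewrite ln_1; lra|].
    rewrite <- ln_1. left. apply ln_increasing; lra. }
  assert (Hln1 : ln (b / a) <= b / a - 1).
  { destruct (Req_dec (ln (b / a)) 0) as [->|Hne]; [lra|].
    pose proof (exp_ineq1 _ Hne) as Hexp. rewrite exp_ln in Hexp by lra. lra. }
  assert (Hqa : b / a - 1 <= b - a).
  { apply (Rmult_le_reg_r a); [lra|].
    replace ((b / a - 1) * a) with (b - a) by (field; lra). nra. }
  unfold log10. pose proof ln10_gt1.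
  apply (Rmult_le_reg_r (ln 10)); [lra|]. unfold Rdiv. rewrite Rmult_assoc, Rinv_l by lra. nra.
Qed.

(** The winning set as a combination of thresholds *)

Definition ind (t z : R) : R := if Rlt_dec z t then 1 else 0.

Lemma win_split z : win_ind z = ind 4 z - ind 1 z + ind 40 z - ind 10 z.
Proof. unfold win_ind, ind. repeat destruct Rle_dec; repeat destruct Rlt_dec; lra. Qed.

Lemma win_bounds z : 0 <= win_ind z <= 1.
Proof. unfold win_ind. repeat destruct Rle_dec; repeat destruct Rlt_dec; lra. Qed.

Lemma ind_scale t x c : 0 < c -> ind t (x * c) = ind (t / c) x.
Proof.
  intro Hc. assert (t / c * c = t) by (field; lra). unfold ind.
  destruct (Rlt_dec (x * c) t); destruct (Rlt_dec x (t / c)); auto; exfalso; nra.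
Qed.

(* log10 of t truncated to [1,10]: the Benford mass of [1, t). *)
Definition clamp_log (t : R) : R := log10 (Rmax 1 (Rmin 10 t)).

(* Against a factor c in [1,10), the Benford mass of [1/c,4/c) ∪ [10/c,40/c)
   is exactly log10 4, whatever c is. *)
Lemma four_clamps c : 1 <= c < 10 ->
  clamp_log (4 / c) - clamp_log (1 / c) + clamp_log (40 / c) - clamp_log (10 / c) = log10 4.
Proof.
  intro Hc. unfold clamp_log.
  assert (Hclamp : forall t, 1 <= t <= 10 -> Rmax 1 (Rmin 10 t) = t)
    by (intros; unfold Rmax, Rmin; repeat destruct Rle_dec; lra).
  assert (Hlow : forall t, t <= 1 -> Rmax 1 (Rmin 10 t) = 1)
    by (intros; unfold Rmax, Rmin; repeat destruct Rle_dec; lra).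
  assert (Hhigh : forall t, 10 <= t -> Rmax 1 (Rmin 10 t) = 10)
    by (intros; unfold Rmax, Rmin; repeat destruct Rle_dec; lra).
  assert (Hlog : forall a, 0 < a -> log10 (a / c) = log10 a - log10 c)
    by (intros; apply log10_div; lra).
  assert (H40 : log10 40 = log10 4 + 1).
  { rewrite <- log10_10, <- log10_mult by lra. f_equal. ring. }
  assert (A4 : 4 / c * c = 4) by (field; lra).
  assert (A10 : 10 / c * c = 10) by (field; lra).
  assert (A40 : 40 / c * c = 40) by (field; lra).
  assert (A1 : 1 / c * c = 1) by (field; lra).
  rewrite (Hlow (1 / c)) by nra. rewrite (Hclamp (10 / c)) by nra.
  rewrite Hlog, log10_10, log10_1 by lra.
  destruct (Rle_dec c 4).
  - rewrite (Hclamp (4 / c)), (Hhigh (40 / c)) by nra.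
    rewrite Hlog, log10_10 by lra. ring.
  - rewrite (Hlow (4 / c)), (Hclamp (40 / c)) by nra.
    rewrite Hlog, H40, log10_1 by lra. ring.
Qed.

(** Benford masses on a partition of [1,10] *)

Section LogPartition.
Variables (x : nat -> R) (h : R).

Hypothesis x_start : x 0%nat = 1.
Hypothesis x_step : forall i, x i <= x (S i) <= x i + h.

Definition log_mass (i : nat) : R := log10 (x (S i)) - log10 (x i).

Lemma x_ge1 i : 1 <= x i.
Proof.
  induction i as [|i IH]; [rewrite x_start; lra|]. specialize (x_step i). lra.
Qed.

Lemma log_mass_nonneg i : 0 <= log_mass i.
Proof.
  unfold log_mass. pose proof (x_ge1 i). pose proof (x_step i).
  assert (log10 (x i) <= log10 (x (S i))) by (apply log10_le; lra). lra.
Qed.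

Lemma log_mass_total K : fsum K log_mass = log10 (x K).
Proof.
  unfold log_mass. rewrite (fsum_telescope K (fun k => log10 (x k))), x_start, log10_1. ring.
Qed.

Definition mass_below (K : nat) (t : R) : R := fsum K (fun i => log_mass i * ind t (x i)).

Lemma mass_below_bounds K t :
  log10 (Rmax 1 (Rmin (x K) t)) <= mass_below K t <= log10 (Rmax 1 (Rmin (x K) (t + h))).
Proof.
  unfold mass_below. induction K as [|K IH]; simpl.
  - rewrite x_start, !(Rmax_left 1) by apply Rmin_l. rewrite log10_1. lra.
  - pose proof (x_ge1 K) as Hx. pose proof (x_step K) as Hs.
    unfold ind, log_mass in *. destruct (Rlt_dec (x K) t).
    + assert (E1 : Rmax 1 (Rmin (x K) t) = x K)
        by (unfold Rmax, Rmin; repeat destruct Rle_dec; lra).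
      assert (E2 : Rmax 1 (Rmin (x K) (t + h)) = x K)
        by (unfold Rmax, Rmin; repeat destruct Rle_dec; lra).
      assert (E3 : Rmax 1 (Rmin (x (S K)) (t + h)) = x (S K))
        by (unfold Rmax, Rmin; repeat destruct Rle_dec; lra).
      rewrite E1, E2 in IH. rewrite E3.
      assert (log10 (Rmax 1 (Rmin (x (S K)) t)) <= log10 (x (S K)))
        by (apply log10_le; unfold Rmax, Rmin; repeat destruct Rle_dec; lra).
      lra.
    + assert (E1 : Rmax 1 (Rmin (x (S K)) t) = Rmax 1 (Rmin (x K) t))
        by (unfold Rmax, Rmin; repeat destruct Rle_dec; lra).
      assert (log10 (Rmax 1 (Rmin (x K) (t + h))) <= log10 (Rmax 1 (Rmin (x (S K)) (t + h))))
        by (apply log10_le; unfold Rmax, Rmin; repeat destruct Rle_dec; lra).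
      rewrite E1. lra.
Qed.

Lemma mass_below_approx K t : x K = 10 ->
  clamp_log t <= mass_below K t <= clamp_log t + h.
Proof.
  intro HK. pose proof (mass_below_bounds K t) as Hb. rewrite HK in Hb.
  unfold clamp_log. split; [lra|].
  assert (h0 : 0 <= h) by (specialize (x_step 0%nat); lra).
  assert (log10 (Rmax 1 (Rmin 10 (t + h))) - log10 (Rmax 1 (Rmin 10 t)) <= h); [|lra].
  eapply Rle_trans; [apply log10_lipschitz|];
    unfold Rmax, Rmin; repeat destruct Rle_dec; lra.
Qed.

Lemma win_mass K c : x K = 10 -> 1 <= c < 10 ->
  log10 4 - 2 * h <= fsum K (fun i => log_mass i * win_ind (x i * c)) <= log10 4 + 2 * h.
Proof.
  intros HK Hc.
  assert (Hsplit : fsum K (fun i => log_mass i * win_ind (x i * c)) =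
    mass_below K (4 / c) - mass_below K (1 / c) + mass_below K (40 / c) - mass_below K (10 / c)).
  { unfold mass_below. rewrite <- !fsum_sub, <- fsum_add, <- fsum_sub.
    apply fsum_ext. intros i _. rewrite win_split, !ind_scale by lra. ring. }
  rewrite Hsplit.
  pose proof (mass_below_approx K (4 / c) HK). pose proof (mass_below_approx K (1 / c) HK).
  pose proof (mass_below_approx K (40 / c) HK). pose proof (mass_below_approx K (10 / c) HK).
  pose proof (four_clamps c Hc). lra.
Qed.

End LogPartition.

Definition mesh (n : nat) : R := / 10 ^ (n - 1).
Definition grid_size (n : nat) : nat := 9 * 10 ^ (n - 1).
Definition beta_grid (n i : nat) : R := 1 + INR i * mesh n.

Lemma mesh_pos n : 0 < mesh n.
Proof. unfold mesh. apply Rinv_0_lt_compat, pow_lt. lra. Qed.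

Lemma beta_grid_step n i : beta_grid n i <= beta_grid n (S i) <= beta_grid n i + mesh n.
Proof. unfold beta_grid. rewrite S_INR. pose proof (mesh_pos n). lra. Qed.

Lemma beta_grid_end n : beta_grid n (grid_size n) = 10.
Proof.
  unfold beta_grid, grid_size, mesh. rewrite mult_INR, pow_INR.
  replace (INR 9) with 9 by (simpl; ring). replace (INR 10) with 10 by (simpl; ring).
  assert (0 < 10 ^ (n - 1)) by (apply pow_lt; lra). field. lra.
Qed.

Lemma beta_pt_grid n i : (i < grid_size n)%nat -> beta_pt n i = beta_grid n i.
Proof.
  intro Hi. unfold beta_pt. destruct (Nat.ltb_spec i (9 * 10 ^ (n - 1))) as [_|C];
    [|unfold grid_size in Hi; lia].
  unfold beta_grid, mesh. rewrite plus_INR, pow_INR.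
  replace (INR 10) with 10 by (simpl; ring).
  assert (0 < 10 ^ (n - 1)) by (apply pow_lt; lra). field. lra.
Qed.

Lemma beta_wt_grid n i : (i < grid_size n)%nat -> beta_wt n i = log_mass (beta_grid n) i.
Proof.
  intro Hi. unfold beta_wt, log_mass. destruct (Nat.ltb_spec i (9 * 10 ^ (n - 1))) as [_|C];
    [|unfold grid_size in Hi; lia].
  rewrite beta_pt_grid by exact Hi. f_equal. f_equal.
  unfold beta_grid, mesh. rewrite S_INR. ring.
Qed.

Lemma beta_wt_out n i : (grid_size n <= i)%nat -> beta_wt n i = 0.
Proof.
  intro Hi. unfold beta_wt. destruct (Nat.ltb_spec i (9 * 10 ^ (n - 1))) as [C|_];
    [unfold grid_size in Hi; lia|reflexivity].
Qed.

Lemma beta_wt_nonneg n i : 0 <= beta_wt n i.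
Proof.
  destruct (Nat.le_gt_cases (grid_size n) i) as [Hi|Hi].
  - rewrite beta_wt_out by exact Hi. lra.
  - rewrite beta_wt_grid by exact Hi.
    apply (log_mass_nonneg _ (mesh n)); [unfold beta_grid; simpl; ring|apply beta_grid_step].
Qed.

Lemma beta_wt_fsum n : fsum (grid_size n) (beta_wt n) = 1.
Proof.
  rewrite (fsum_ext _ _ (log_mass (beta_grid n))) by (intros; apply beta_wt_grid; assumption).
  rewrite log_mass_total, beta_grid_end; [apply log10_10|].
  unfold beta_grid. simpl. ring.
Qed.

Lemma beta_wt_sum n : infinite_sum (beta_wt n) 1.
Proof. rewrite <- (beta_wt_fsum n). apply finite_sum, beta_wt_out. Qed.

Lemma beta_pt_inX n i : inX (beta_pt n i).
Proof.
  unfold beta_pt. destruct (Nat.ltb_spec i (9 * 10 ^ (n - 1))).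
  - exists (n - 1)%nat, (10 ^ (n - 1) + i)%nat. split; [|reflexivity].
    rewrite Nat.pow_succ_r'. lia.
  - exists 0%nat, 1%nat. split; [simpl; lia|]. simpl. field.
Qed.

Definition beta (n : nat) : pmeasure :=
  PMeasure (beta_wt n) (beta_pt n) (beta_wt_nonneg n) (beta_pt_inX n) (beta_wt_sum n).

Lemma beta_win_mass n c : 1 <= c < 10 ->
  log10 4 - 2 * mesh n <= fsum (grid_size n) (fun i => beta_wt n i * win_ind (beta_pt n i * c))
  <= log10 4 + 2 * mesh n.
Proof.
  intro Hc.
  rewrite (fsum_ext _ _ (fun i => log_mass (beta_grid n) i * win_ind (beta_grid n i * c)))
    by (intros; rewrite beta_wt_grid, beta_pt_grid by assumption; reflexivity).
  apply win_mass; [unfold beta_grid; simpl; ring|apply beta_grid_step|apply beta_grid_end|exact Hc].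
Qed.

(** Payoff against a finitely supported strategy *)

Lemma inX_bounds x : inX x -> 1 <= x < 10.
Proof.
  intros [m [N [[H1 H2] ->]]].
  apply le_INR in H1. apply lt_INR in H2. rewrite !pow_INR in H1, H2.
  replace (INR 10) with 10 in H1, H2 by (simpl; ring). simpl in H2.
  assert (0 < 10 ^ m) by (apply pow_lt; lra).
  assert (INR N / 10 ^ m * 10 ^ m = INR N) by (field; lra).
  split; nra.
Qed.

Lemma weighted_win_bounds q z : 0 <= q -> 0 <= q * win_ind z <= q.
Proof. intro Hq. pose proof (win_bounds z). nra. Qed.

Lemma Pw_finite_casino (c x : nat -> R) K v nu :
  (forall i, (K <= i)%nat -> c i = 0) ->
  (forall y, 1 <= y < 10 -> v <= fsum K (fun i => c i * win_ind (x i * y))) ->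
  v <= Pw c x (wt nu) (pt nu).
Proof.
  intros Hsupp Hrow. unfold Pw.
  set (q := wt nu). set (y := pt nu).
  set (T := fun i => tsum (fun j => q j * win_ind (x i * y j))).
  assert (HT : forall i, infinite_sum (fun j => q j * win_ind (x i * y j)) (T i)).
  { intro i. apply (isum_comp _ q 1); [|apply (wt_sum1 nu)].
    intro j. apply weighted_win_bounds, (wt_nonneg nu). }
  rewrite (tsum_eq _ (fsum K (fun i => c i * T i)))
    by (apply finite_sum; intros i Hi; rewrite Hsupp by exact Hi; ring).
  rewrite <- (Rmult_1_r v).
  apply (isum_le (fun j => v * q j) (fun j => fsum K (fun i => c i * (q j * win_ind (x i * y j))))).
  - intro j.
    rewrite (fsum_ext _ _ (fun i => q j * (c i * win_ind (x i * y j)))) by (intros; ring).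
    rewrite fsum_scal.
    pose proof (Hrow (y j) (inX_bounds _ (pt_inX nu j))).
    pose proof (wt_nonneg nu j) as Hq. fold q in Hq. nra.
  - apply isum_scal, wt_sum1.
  - apply isum_swap, HT.
Qed.

Lemma Pw_finite_player (d y : nat -> R) K v mu :
  (forall j, (K <= j)%nat -> d j = 0) -> (forall j, 0 <= d j) -> fsum K d = 1 ->
  (forall x, 1 <= x < 10 -> fsum K (fun j => d j * win_ind (x * y j)) <= v) ->
  Pw (wt mu) (pt mu) d y <= v.
Proof.
  intros Hsupp Hnonneg Htotal Hcol. unfold Pw.
  set (w := wt mu). set (x := pt mu).
  set (C := fun i => fsum K (fun j => d j * win_ind (x i * y j))).
  assert (HC : forall i, tsum (fun j => d j * win_ind (x i * y j)) = C i).
  { intro i. apply tsum_eq, finite_sum. intros j Hj. rewrite Hsupp by exact Hj. ring. }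
  assert (HC01 : forall i, 0 <= C i <= 1).
  { intro i. rewrite <- Htotal. unfold C. split.
    - apply fsum_nonneg. intro j. apply weighted_win_bounds, Hnonneg.
    - apply fsum_le. intro j. apply weighted_win_bounds, Hnonneg. }
  set (f := fun i => w i * tsum (fun j => d j * win_ind (x i * y j))).
  assert (Hf : infinite_sum f (tsum f)).
  { apply (isum_comp f w 1); [|apply (wt_sum1 mu)].
    intro i. unfold f. rewrite HC. pose proof (HC01 i).
    pose proof (wt_nonneg mu i) as Hw. fold w in Hw. nra. }
  rewrite <- (Rmult_1_r v).
  apply (isum_le f (fun i => v * w i)); [|exact Hf|apply isum_scal, wt_sum1].
  intro i. unfold f. rewrite HC. unfold C.
  pose proof (Hcol (x i) (inX_bounds _ (pt_inX mu i))).
  pose proof (wt_nonneg mu i) as Hw. fold w in Hw. nra.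
Qed.

Lemma beta_casino n nu : log10 4 - 2 * mesh n <= Pw (beta_wt n) (beta_pt n) (wt nu) (pt nu).
Proof.
  apply (Pw_finite_casino _ _ (grid_size n)); [apply beta_wt_out|].
  intros c Hc. apply beta_win_mass, Hc.
Qed.

Lemma beta_player n mu : Pw (wt mu) (pt mu) (beta_wt n) (beta_pt n) <= log10 4 + 2 * mesh n.
Proof.
  apply (Pw_finite_player _ _ (grid_size n));
    [apply beta_wt_out|apply beta_wt_nonneg|apply beta_wt_fsum|].
  intros c Hc.
  rewrite (fsum_ext _ _ (fun j => beta_wt n j * win_ind (beta_pt n j * c)))
    by (intros; rewrite Rmult_comm with (r1 := c); reflexivity).
  apply beta_win_mass, Hc.
Qed.

Lemma mesh_small eps : eps > 0 -> exists N, forall n, (N <= n)%nat -> 2 * mesh n <= eps.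
Proof.
  intro Heps.
  destruct (pow_lt_1_zero (/ 10) ltac:(rewrite Rabs_pos_eq; lra) (eps / 2) ltac:(lra)) as [N HN].
  exists (S N). intros n Hn. specialize (HN (n - 1)%nat ltac:(lia)).
  unfold mesh. rewrite <- pow_inv.
  rewrite Rabs_pos_eq in HN by (apply pow_le; lra). lra.
Qed.

Lemma beta_eps_optimal eps : eps > 0 -> exists N : nat, forall n : nat, (N <= n)%nat ->
  (forall nu : pmeasure, log10 4 - eps <= Pw (beta_wt n) (beta_pt n) (wt nu) (pt nu))
  /\ (forall mu : pmeasure, Pw (wt mu) (pt mu) (beta_wt n) (beta_pt n) <= log10 4 + eps).
Proof.
  intro Heps. destruct (mesh_small eps Heps) as [N HN]. exists N. intros n Hn.
  specialize (HN n Hn). split.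
  - intro nu. pose proof (beta_casino n nu). lra.
  - intro mu. pose proof (beta_player n mu). lra.
Qed.

Theorem mainTheorem2 :
  IsSup (fun a => exists mu : pmeasure,
            IsInf (fun p => exists nu : pmeasure, p = P mu nu) a) (log10 4)
  /\ IsInf (fun a => exists nu : pmeasure,
            IsSup (fun p => exists mu : pmeasure, p = P mu nu) a) (log10 4)
  /\ (forall eps : R, eps > 0 -> exists N : nat, forall n : nat, (1 <= n)%nat -> (N <= n)%nat ->
        (forall nu : pmeasure,
            Pw (beta_wt n) (beta_pt n) (wt nu) (pt nu) >= log10 4 - eps)
        /\ (forall mu : pmeasure,
            Pw (wt mu) (pt mu) (beta_wt n) (beta_pt n) <= log10 4 + eps)).
Proof.
  assert (Hcasino : forall eps, eps > 0 -> exists mu0, forall nu, log10 4 - eps <= P mu0 nu).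
  { intros eps Heps. destruct (beta_eps_optimal eps Heps) as [N HN].
    exists (beta N). apply (HN N (le_n N)). }
  assert (Hplayer : forall eps, eps > 0 -> exists nu0, forall mu, P mu nu0 <= log10 4 + eps).
  { intros eps Heps. destruct (beta_eps_optimal eps Heps) as [N HN].
    exists (beta N). apply (HN N (le_n N)). }
  split; [apply lower_value; assumption|].
  split; [apply upper_value; assumption|].
  intros eps Heps. destruct (beta_eps_optimal eps Heps) as [N HN].
  exists N. intros n _ Hn. destruct (HN n Hn) as [Hc Hp].
  split; [intro nu; apply Rle_ge, Hc | exact Hp].
Qed.
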